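(* Let $G$ be a group with a regular gliding system. For any set $\mathcal{D}\subset G$, the glide complex $X_{\mathcal{D}}$ is nonpositively curved if and only if $\mathcal{D}$ satisfies the cube condition. In particular, $X_G$ is nonpositively curved.
   Context: Gliding system $(\mathcal{G},\mathcal{I})$ in $G$: $\mathcal{G}\subset G\setminus\{1\}$ closed under inversion (glides), $\mathcal{I}\subset\mathcal{G}\times\mathcal{G}$ (independence) with $(s^{-1},t),(t,s)\in\mathcal{I}$ and $st=ts\ne1$ whenever $(s,t)\in\mathcal{I}$. Pre-cubic set: finite set $S$ of pairwise independent glides, $[S]=\prod_{s\in S}s$; cubic: pre-cubic with $[T_1]\ne[T_2]$ for distinct $T_1,T_2\subset S$. The gliding system is regular if every pre-cubic set is cubic. Glide complex $X_G$: cubed complex with one $k$-cube for each equivalence class of based cubes $(A,S)$ ($A\in G$, $S$ cubic of size $k$) under $(A,S)\sim([T]A,(S\setminus T)\cup\{t^{-1}:t\in T\})$, $T\subset S$; vertices $[T]A$, faces the cubes of $(A,S')$, $S'\subset S$. $X_{\mathcal{D}}$: subcomplex of cubes all of whose vertices lie in $\mathcal{D}$. Cube condition on $\mathcal{D}$: for every $A\in\mathcal{D}$ and pairwise independent glides $s_1,s_2,s_3$ with $s_iA\in\mathcal{D}$ and $s_is_jA\in\mathcal{D}$ for all $i\ne j$, one has $s_1s_2s_3A\in\mathcal{D}$. Nonpositively curved: links of $0$-cells are simplicial flag complexes. *)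

(* groups here may be infinite, so we use an explicit record. *)
From Stdlib Require Import List Relations.
Import ListNotations.
Set Implicit Arguments.

Record Group := {
  carrier :> Type;
  mul : carrier -> carrier -> carrier;
  one : carrier;
  inv : carrier -> carrier;
  mulA : forall x y z, mul x (mul y z) = mul (mul x y) z;
  mul1g : forall x, mul one x = x;
  mulg1 : forall x, mul x one = x;
  mulVg : forall x, mul (inv x) x = one;
  mulgV : forall x, mul x (inv x) = one
}.

Arguments mul {g}.
Arguments one {g}.
Arguments inv {g}.

Record GlidingSystem (G : Group) := {
  glide : G -> Prop;
  indep : G -> G -> Prop;
  glide_ne1 : forall s, glide s -> s <> one;
  glide_inv : forall s, glide s -> glide (inv s);
  indep_glides : forall s t, indep s t -> glide s /\ glide t;
  indep_inv : forall s t, indep s t -> indep (inv s) t;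
  indep_sym : forall s t, indep s t -> indep t s;
  indep_comm : forall s t, indep s t -> mul s t = mul t s;
  indep_ne1 : forall s t, indep s t -> mul s t <> one
}.

Section Glide.
Variable G : Group.
Variable GS : GlidingSystem G.

(** Finite sets of group elements are duplicate-free lists. *)
Definition sameset (T1 T2 : list G) : Prop := forall x, In x T1 <-> In x T2.
Definition subl (T S : list G) : Prop := NoDup T /\ incl T S.

(** [S] = product of the elements of S (order irrelevant for pairwise
    commuting elements). *)
Definition prodl (S : list G) : G := fold_right mul one S.

Definition pre_cubic (S : list G) : Prop :=
  NoDup S /\ (forall s, In s S -> glide GS s) /\
  (forall s t, In s S -> In t S -> s <> t -> indep GS s t).

Definition cubic (S : list G) : Prop :=
  pre_cubic S /\
  (forall T1 T2, subl T1 S -> subl T2 S -> ~ sameset T1 T2 -> prodl T1 <> prodl T2).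

Definition regular : Prop := forall S, pre_cubic S -> cubic S.

(** Based cubes (A,S); the generating relation
    (A,S) ~ ([T]A, (S \ T) u T^{-1}),  T subset S. *)
Definition based_cube := (G * list G)%type.

Definition cube_rel (c c' : based_cube) : Prop :=
  let (A, S) := c in let (B, S') := c' in
  cubic S /\ cubic S' /\
  exists T, subl T S /\ B = mul (prodl T) A /\
    (forall x, In x S' <-> ((In x S /\ ~ In x T) \/ exists t, In t T /\ x = inv t)).

(** Cubes of X_G are equivalence classes for the equivalence generated by ~. *)
Definition cube_equiv : relation based_cube := clos_refl_sym_trans _ cube_rel.

(** A based cube is a cube of X_D iff all its vertices [T]A lie in D. *)
Definition in_XD (D : G -> Prop) (c : based_cube) : Prop :=
  cubic (snd c) /\ forall T, subl T (snd c) -> D (mul (prodl T) (fst c)).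

(** A corner at v of a cube C of X_D is a
    based representative (v,S) of C; its (simplex-)vertices are the corners
    at v of its edges, i.e. the glides s in S (edge (v,[s])).  We record a
    simplex of the link by its list S of vertices. *)
Definition link_simplex (D : G -> Prop) (v : G) (S : list G) : Prop :=
  S <> [] /\ cubic S /\ exists c, in_XD D c /\ cube_equiv (v, S) c.

Definition link_vertex (D : G -> Prop) (v : G) (s : G) : Prop :=
  link_simplex D v [s].

Definition link_simplicial (D : G -> Prop) (v : G) : Prop :=
  (forall S, link_simplex D v S -> NoDup S /\ forall s, In s S -> link_vertex D v s) /\
  (forall S S', link_simplex D v S -> S' <> [] -> subl S' S -> link_simplex D v S').

Definition link_flag (D : G -> Prop) (v : G) : Prop :=
  forall S, S <> [] -> NoDup S ->
    (forall s, In s S -> link_vertex D v s) ->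
    (forall s t, In s S -> In t S -> s <> t -> link_simplex D v [s; t]) ->
    link_simplex D v S.

Definition NPC (D : G -> Prop) : Prop :=
  forall v, in_XD D (v, []) -> link_simplicial D v /\ link_flag D v.

Definition cube_condition (D : G -> Prop) : Prop :=
  forall A s1 s2 s3, D A ->
    s1 <> s2 -> s1 <> s3 -> s2 <> s3 ->
    indep GS s1 s2 -> indep GS s1 s3 -> indep GS s2 s3 ->
    D (mul s1 A) -> D (mul s2 A) -> D (mul s3 A) ->
    D (mul s1 (mul s2 A)) -> D (mul s1 (mul s3 A)) -> D (mul s2 (mul s3 A)) ->
    D (mul s1 (mul s2 (mul s3 A))).

End Glide.

From Stdlib Require Import List Relations Permutation ClassicalEpsilon Classical Bool Lia Wf_nat.
Import ListNotations.

(* 1. Products of pairwise commuting elements.  [S] does not depend on the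
      order of S; for T, U inside a pre-cubic set, [U] = [(U \ T) u (T \ U)^-1][T]
      (the "exchange" identity), and [U] = [S filtered by membership in U].
   2. Invariance of X_D-membership.  The exchange identity shows that every
      vertex of a based cube (A,S) is a vertex of any related cube ([T]A,S'),
      so "all vertices lie in D" is invariant under the equivalence of based
      cubes.  Hence a corner (v,S) is a simplex of the link of v in X_D
      exactly when S is nonempty and all vertices [U]v (U subset S) lie in D.
   3. The cube condition propagates membership in D from the vertices [U]v
      with |U| <= 2 to all vertices (induction on |U|).  Together with
      regularity (every pre-cubic set is cubic) this makes links flag; faces
      of simplices are simplices since subsets of cubic sets are cubic.
   4. Conversely, flagness of the link applied to three pairwise independent
      glides yields the 3-cube, whose top vertex is s1 s2 s3 A. *)

Arguments prodl {G} S.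
Arguments subl {G} T S.

Section Products.

Variable G : Group.

Lemma invK (x : G) : inv (inv x) = x.
Proof.
  rewrite <- (mulg1 G (inv (inv x))), <- (mulVg G x), mulA, mulVg. apply mul1g.
Qed.

Definition commute (x y : G) : Prop := mul x y = mul y x.

Definition pairwise_commute (L : list G) : Prop :=
  forall x y, In x L -> In y L -> commute x y.

Lemma commute_inv_r (a b : G) : commute a b -> commute a (inv b).
Proof.
  unfold commute; intro H.
  rewrite <- (mul1g _ (mul a (inv b))), <- (mulVg _ b), <- mulA, (mulA _ b a), <- H.
  rewrite <- (mulA _ a b), mulgV, mulg1. reflexivity.
Qed.

Lemma commute_prodl (a : G) (L : list G) :
  (forall x, In x L -> commute a x) -> commute a (prodl L).
Proof.
  induction L as [|y L IH]; intro H; unfold commute; simpl.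
  - rewrite mulg1, mul1g; reflexivity.
  - rewrite mulA, (H y (or_introl eq_refl)), <- mulA.
    rewrite IH by (intros; apply H; simpl; auto). rewrite mulA. reflexivity.
Qed.

Lemma pairwise_commute_incl (L L' : list G) :
  pairwise_commute L -> incl L' L -> pairwise_commute L'.
Proof. unfold pairwise_commute; intros H Hi x y Hx Hy; apply H; auto. Qed.

Lemma prodl_app (l1 l2 : list G) : prodl (l1 ++ l2) = mul (prodl l1) (prodl l2).
Proof.
  induction l1 as [|x l1 IH]; simpl; [rewrite mul1g | rewrite IH, mulA]; reflexivity.
Qed.

Lemma prodl_cons_mul (x : G) (l : list G) (v : G) :
  mul (prodl (x :: l)) v = mul x (mul (prodl l) v).
Proof. simpl. rewrite mulA. reflexivity. Qed.

Lemma prodl_perm (l1 l2 : list G) :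
  Permutation l1 l2 -> pairwise_commute l1 -> prodl l1 = prodl l2.
Proof.
  intro Hp; induction Hp as [| x l l' _ IH | x y l | l l' l'' H12 IH12 _ IH23];
    intro H; simpl.
  - reflexivity.
  - rewrite IH; [reflexivity|]. apply (pairwise_commute_incl _ _ H). intros z Hz; simpl; auto.
  - rewrite !mulA, (H y x) by (simpl; auto). reflexivity.
  - rewrite IH12 by exact H. apply IH23.
    intros a b Ha Hb. apply H; apply (Permutation_in _ (Permutation_sym H12)); assumption.
Qed.

Lemma prodl_inv_l (L : list G) :
  pairwise_commute L -> mul (prodl (map inv L)) (prodl L) = one.
Proof.
  induction L as [|a L IH]; intro H; simpl.
  - apply mul1g.
  - assert (Ha : commute a (prodl (map inv L))).
    { apply commute_prodl. intros x Hx. apply in_map_iff in Hx as [y [<- Hy]].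
      apply commute_inv_r, H; simpl; auto. }
    rewrite <- mulA, (mulA _ (prodl (map inv L)) a), <- Ha, <- mulA, (mulA _ (inv a) a).
    rewrite mulVg, mul1g. apply IH.
    apply (pairwise_commute_incl _ _ H). intros z Hz; simpl; auto.
Qed.

Lemma prodl_filter_split (f : G -> bool) (l : list G) :
  pairwise_commute l ->
  prodl l = mul (prodl (filter f l)) (prodl (filter (fun x => negb (f x)) l)).
Proof.
  induction l as [|a l IH]; intro H; simpl.
  - rewrite mul1g; reflexivity.
  - assert (Hl : pairwise_commute l)
      by (apply (pairwise_commute_incl _ _ H); intros z Hz; simpl; auto).
    destruct (f a); simpl; rewrite IH by exact Hl; rewrite mulA; [reflexivity|].
    assert (Hc : commute a (prodl (filter f l))).
    { apply commute_prodl. intros x Hx. apply filter_In in Hx. apply H; simpl; tauto. }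
    rewrite Hc, <- mulA. reflexivity.
Qed.

Definition inb (x : G) (L : list G) : bool :=
  if excluded_middle_informative (In x L) then true else false.

Lemma inb_true (x : G) (L : list G) : inb x L = true <-> In x L.
Proof.
  unfold inb; destruct (excluded_middle_informative (In x L)); split; auto; discriminate.
Qed.

Lemma inb_false (x : G) (L : list G) : negb (inb x L) = true <-> ~ In x L.
Proof.
  rewrite negb_true_iff; unfold inb.
  destruct (excluded_middle_informative (In x L)); split; auto; try discriminate; tauto.
Qed.

Lemma NoDup_map_inv (l : list G) : NoDup l -> NoDup (map inv l).
Proof.
  intro H. apply FinFun.Injective_map_NoDup; auto.
  intros a b E. rewrite <- (invK a), <- (invK b), E. reflexivity.
Qed.

Lemma prodl_exchange (S T U : list G) :
  pairwise_commute S -> NoDup T -> incl T S -> NoDup U -> incl U S ->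
  mul (prodl (filter (fun x => negb (inb x T)) U ++
              map inv (filter (fun x => negb (inb x U)) T))) (prodl T) = prodl U.
Proof.
  intros PS HTn HTi HUn HUi.
  assert (PT := pairwise_commute_incl _ _ PS HTi).
  assert (PU := pairwise_commute_incl _ _ PS HUi).
  set (UT := filter (fun x => negb (inb x T)) U).
  set (TU := filter (fun x => negb (inb x U)) T).
  set (TcapU := filter (fun x => inb x U) T).
  assert (HT : prodl T = mul (prodl TcapU) (prodl TU)) by apply prodl_filter_split, PT.
  assert (HU : prodl U = mul (prodl UT) (prodl TcapU)).
  { rewrite (prodl_filter_split (fun x => negb (inb x T)) U PU).
    f_equal. apply prodl_perm.
    - apply NoDup_Permutation; try (apply NoDup_filter; assumption).
      intro x. unfold TcapU. rewrite !filter_In, negb_involutive, !inb_true. tauto.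
    - apply (pairwise_commute_incl _ _ PU). intros z Hz; apply filter_In in Hz; tauto. }
  assert (Hc : commute (prodl TcapU) (prodl (map inv TU))).
  { apply commute_prodl. intros x Hx. apply in_map_iff in Hx as [t [<- Ht]].
    apply commute_inv_r. apply filter_In in Ht as [Ht _].
    symmetry. apply commute_prodl. intros y Hy. apply filter_In in Hy as [Hy _].
    apply PT; assumption. }
  assert (PTU : pairwise_commute TU)
    by (apply (pairwise_commute_incl _ _ PT); intros z Hz; apply filter_In in Hz; tauto).
  rewrite prodl_app, HT, HU, <- mulA. f_equal.
  rewrite (mulA _ (prodl (map inv TU))), <- Hc, <- mulA, prodl_inv_l, mulg1 by exact PTU.
  reflexivity.
Qed.

Lemma prodl_subl_filter (S U : list G) :
  NoDup S -> pairwise_commute S -> subl U S ->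
  prodl U = prodl (filter (fun x => inb x U) S).
Proof.
  intros HS PS [HUn HUi]. apply prodl_perm.
  - apply NoDup_Permutation; [exact HUn | apply NoDup_filter, HS |].
    intro x. rewrite filter_In, inb_true. split; [intro Hx; auto | tauto].
  - exact (pairwise_commute_incl _ _ PS HUi).
Qed.

End Products.

Section Cubes.

Variable G : Group.
Variable GS : GlidingSystem G.
Hypothesis Hreg : regular GS.

Lemma pre_cubic_commute (S : list G) : pre_cubic GS S -> pairwise_commute G S.
Proof.
  intros [_ [_ H]] x y Hx Hy. destruct (classic (x = y)) as [<-|Hne].
  - reflexivity.
  - apply (indep_comm GS). auto.
Qed.

Lemma pre_cubic_no_inverse (S : list G) (x t : G) : pre_cubic GS S ->
  In x S -> In t S -> x <> t -> x <> inv t.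
Proof.
  intros [_ [_ H]] Hx Ht Hne E. apply (indep_ne1 GS x t); auto. subst. apply mulVg.
Qed.

Lemma pre_cubic_incl (S S' : list G) :
  pre_cubic GS S -> NoDup S' -> incl S' S -> pre_cubic GS S'.
Proof.
  intros [_ [Hg Hi]] Hn Hs. split; [exact Hn | split].
  - intros s Hs'. apply Hg, Hs, Hs'.
  - intros s t H1 H2 H3. apply Hi; auto.
Qed.

Lemma vertex_of_related_cube (A : G) (S T S' : list G) :
  cubic GS S -> subl T S ->
  (forall x, In x S' <-> ((In x S /\ ~ In x T) \/ exists t, In t T /\ x = inv t)) ->
  forall U, subl U S -> exists U', subl U' S' /\
     mul (prodl U') (mul (prodl T) A) = mul (prodl U) A.
Proof.
  intros [HS _] [HTn HTi] HS' U [HUn HUi].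
  exists (filter (fun x => negb (inb G x T)) U ++ map inv (filter (fun x => negb (inb G x U)) T)).
  split; [split|].
  - apply NoDup_app.
    + apply NoDup_filter; exact HUn.
    + apply NoDup_map_inv, NoDup_filter, HTn.
    + intros x Hx Hx'. apply filter_In in Hx as [Hx HxT]. apply inb_false in HxT.
      apply in_map_iff in Hx' as [t [Et Ht]]. apply filter_In in Ht as [Ht HtU].
      apply inb_false in HtU.
      refine (pre_cubic_no_inverse S x t HS _ _ _ (eq_sym Et)); auto; congruence.
  - intros x Hx. apply HS'. apply in_app_or in Hx as [Hx|Hx].
    + left. apply filter_In in Hx as [Hx HxT]. apply inb_false in HxT. auto.
    + right. apply in_map_iff in Hx as [t [Et Ht]]. apply filter_In in Ht.
      exists t; split; [tauto | symmetry; exact Et].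
  - rewrite mulA, prodl_exchange with (S := S); auto. apply pre_cubic_commute, HS.
Qed.

Lemma cube_rel_sym (c c' : based_cube G) : cube_rel GS c c' -> cube_rel GS c' c.
Proof.
  destruct c as [A S], c' as [B S']; simpl.
  intros [HS [HS' [T [[HTn HTi] [EB Hch]]]]].
  split; [exact HS' | split; [exact HS |]]. exists (map inv T).
  assert (PT : pairwise_commute G T)
    by (apply (pairwise_commute_incl _ S); [apply pre_cubic_commute, HS | exact HTi]).
  split; [split | split].
  - apply NoDup_map_inv; exact HTn.
  - intros x Hx. apply in_map_iff in Hx as [t [Et Ht]]. apply Hch. right.
    exists t; split; [exact Ht | symmetry; exact Et].
  - rewrite EB, mulA, (prodl_inv_l G T PT), mul1g. reflexivity.
  - intro x. split.
    + intro Hx. destruct (classic (In x T)) as [HxT|HxT].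
      * right. exists (inv x). split; [apply in_map; exact HxT | symmetry; apply invK].
      * left. split; [apply Hch; left; auto |].
        intro Hm. apply in_map_iff in Hm as [t [Et Ht]].
        apply (pre_cubic_no_inverse S x t (proj1 HS)); auto; congruence.
    + intros [[Hx Hn]|[t' [Ht' Ex]]].
      * apply Hch in Hx as [[Hx _]|[t [Ht Ex]]]; [exact Hx |].
        exfalso. apply Hn. subst. apply in_map; exact Ht.
      * apply in_map_iff in Ht' as [t [Et Ht]]. subst. rewrite invK. auto.
Qed.

Lemma in_XD_cube_equiv (D : G -> Prop) (c c' : based_cube G) :
  cube_equiv GS c c' -> (in_XD GS D c <-> in_XD GS D c').
Proof.
  assert (Back : forall c c', cube_rel GS c c' -> in_XD GS D c' -> in_XD GS D c).
  { intros [A S] [B S'] [HS [HS' [T [HT [EB Hch]]]]] [_ HD]. split; [exact HS |].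
    intros U HU. destruct (vertex_of_related_cube A S T S' HS HT Hch U HU) as [U' [HU' E]].
    simpl. rewrite <- E, <- EB. apply HD, HU'. }
  intro H; induction H as [c c' Hr | | |]; try tauto.
  split; [apply Back, cube_rel_sym | apply Back]; exact Hr.
Qed.

Lemma link_simplex_in_XD (D : G -> Prop) (v : G) (S : list G) :
  link_simplex GS D v S -> in_XD GS D (v, S).
Proof.
  intros [_ [_ [c [Hc Heq]]]]. apply (in_XD_cube_equiv D _ _ Heq), Hc.
Qed.

Lemma in_XD_link_simplex (D : G -> Prop) (v : G) (S : list G) :
  S <> [] -> in_XD GS D (v, S) -> link_simplex GS D v S.
Proof.
  intros Hne HX. split; [exact Hne | split; [exact (proj1 HX) |]].
  exists (v, S). split; [exact HX | apply rst_refl].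
Qed.

(* Faces of cubes of X_D are cubes of X_D (regularity makes them cubic). *)
Lemma in_XD_face (D : G -> Prop) (A : G) (S S' : list G) :
  in_XD GS D (A, S) -> NoDup S' -> incl S' S -> in_XD GS D (A, S').
Proof.
  intros [[HP _] HD] Hn Hs. split; [apply Hreg, (pre_cubic_incl S); assumption |].
  intros U [HUn HUi]. apply HD. split; [exact HUn | intros z Hz; apply Hs, HUi, Hz].
Qed.

Lemma in_XD_of_filters (D : G -> Prop) (A : G) (S : list G) :
  pre_cubic GS S -> (forall f : G -> bool, D (mul (prodl (filter f S)) A)) ->
  in_XD GS D (A, S).
Proof.
  intros HP HD. split; [apply Hreg, HP |]. intros U HU. simpl.
  rewrite (prodl_subl_filter G S U (proj1 HP) (pre_cubic_commute S HP) HU). apply HD.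
Qed.

Lemma vertex_in_XD (D : G -> Prop) (A s : G) :
  pre_cubic GS [s] -> D A -> D (mul s A) -> in_XD GS D (A, [s]).
Proof.
  intros HP HA Hs. apply in_XD_of_filters; [exact HP |]. intro f; simpl.
  destruct (f s); simpl; [rewrite mulg1 | rewrite mul1g]; assumption.
Qed.

Lemma edge_in_XD (D : G -> Prop) (A s t : G) :
  pre_cubic GS [s; t] -> D A -> D (mul s A) -> D (mul t A) -> D (mul s (mul t A)) ->
  in_XD GS D (A, [s; t]).
Proof.
  intros HP HA Hs Ht Hst. apply in_XD_of_filters; [exact HP |]. intro f; simpl.
  destruct (f s), (f t); simpl; rewrite ?mulg1, ?mul1g, <- ?mulA; assumption.
Qed.

Lemma cube_condition_fill (D : G -> Prop) (v : G) (S : list G) :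
  cube_condition GS D -> pre_cubic GS S ->
  (forall U, subl U S -> length U <= 2 -> D (mul (prodl U) v)) ->
  forall U, subl U S -> D (mul (prodl U) v).
Proof.
  intros Hcc HP Hsmall U.
  induction U as [U IH] using (induction_ltof1 _ (@length G)); unfold ltof in IH.
  intros [HUn HUi]. destruct U as [|s1 [|s2 [|s3 R]]];
    try (apply Hsmall; [split; assumption | simpl; lia]).
  assert (Hsub : forall W, incl W (s1 :: s2 :: s3 :: R) -> NoDup W ->
                 length W <= 2 + length R -> D (mul (prodl W) v)).
  { intros W HW HWn HWl. apply IH; [simpl; lia |].
    split; [exact HWn | intros z Hz; apply HUi, HW, Hz]. }
  apply NoDup_cons_iff in HUn as [N1 HUn]. apply NoDup_cons_iff in HUn as [N2 HUn].
  apply NoDup_cons_iff in HUn as [N3 NR].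
  assert (Hind : forall x y, In x (s1 :: s2 :: s3 :: R) -> In y (s1 :: s2 :: s3 :: R) ->
                 x <> y -> indep GS x y)
    by (intros x y Hx Hy; apply (proj2 (proj2 HP)); apply HUi; assumption).
  (* Apply the cube condition at [R]v to s1, s2, s3; the seven vertices it
     requires are [W]v for proper sublists W of U, known by induction. *)
  rewrite !prodl_cons_mul.
  apply Hcc; try (intro E; subst; simpl in *; tauto);
    try (apply Hind; [simpl; tauto | simpl; tauto | intro E; subst; simpl in *; tauto]);
    rewrite <- ?prodl_cons_mul; apply Hsub;
    solve [ intros z Hz; simpl in *; tauto
          | repeat constructor; simpl in *; tauto
          | simpl; lia ].
Qed.

Lemma npc_of_cube_condition (D : G -> Prop) : cube_condition GS D -> NPC GS D.
Proof.
  intros Hcc v Hv. split; [split |].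
  - intros S HL. assert (HX := link_simplex_in_XD D v S HL).
    split; [exact (proj1 (proj1 (proj1 HX))) |].
    intros s Hs. apply in_XD_link_simplex; [discriminate |].
    apply (in_XD_face D v S); [exact HX | repeat constructor; simpl; tauto |].
    intros z [<-|[]]; exact Hs.
  - intros S S' HL Hne [Hn Hs]. apply in_XD_link_simplex; [exact Hne |].
    apply (in_XD_face D v S); [apply link_simplex_in_XD, HL | exact Hn | exact Hs].
  - intros S Hne Hnd Hvx Hedge.
    assert (HP : pre_cubic GS S).
    { split; [exact Hnd | split].
      - intros s Hs. destruct (Hvx s Hs) as [_ [[[_ [Hg _]] _] _]]. apply Hg; left; auto.
      - intros s t Hs Ht Hst. destruct (Hedge s t Hs Ht Hst) as [_ [[[_ [_ Hi]] _] _]].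
        apply Hi; simpl; auto. }
    apply in_XD_link_simplex; [exact Hne |]. split; [apply Hreg, HP |].
    apply (cube_condition_fill D v S Hcc HP). intros U [HUn HUi] Hlen.
    destruct U as [|s [|t [|]]]; [| | | simpl in Hlen; lia].
    + apply (proj2 Hv). split; [constructor | apply incl_nil_l].
    + apply (proj2 (link_simplex_in_XD D v [s] (Hvx s (HUi s (or_introl eq_refl))))).
      split; [exact HUn | apply incl_refl].
    + assert (Hst : s <> t) by (intro E; subst; inversion HUn; simpl in *; tauto).
      apply (proj2 (link_simplex_in_XD D v [s; t]
               (Hedge s t (HUi s ltac:(simpl; auto)) (HUi t ltac:(simpl; auto)) Hst))).
      split; [exact HUn | apply incl_refl].
Qed.

(* Flag links => cube condition: three pairwise independent glides at A whose
   vertices and edges lie in X_D span a 3-cube of X_D. *)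
Lemma cube_condition_of_npc (D : G -> Prop) : NPC GS D -> cube_condition GS D.
Proof.
  intros HN A s1 s2 s3 HA d12 d13 d23 i12 i13 i23 D1 D2 D3 D12 D13 D23.
  set (T3 := [s1; s2; s3]).
  assert (P3 : pre_cubic GS T3).
  { split; [repeat constructor; simpl; intuition congruence | split].
    - intros s Hs; simpl in Hs; destruct Hs as [<-|[<-|[<-|[]]]];
        [exact (proj1 (indep_glides GS _ _ i12)) | exact (proj2 (indep_glides GS _ _ i12))
        | exact (proj2 (indep_glides GS _ _ i13))].
    - intros s t Hs Ht Hst; simpl in Hs, Ht;
        destruct Hs as [<-|[<-|[<-|[]]]]; destruct Ht as [<-|[<-|[<-|[]]]];
        try tauto; try assumption; apply (indep_sym GS); assumption. }
  assert (Hvert : forall s, In s T3 -> D (mul s A))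
    by (intros s Hs; simpl in Hs; destruct Hs as [<-|[<-|[<-|[]]]]; assumption).
  assert (Hedge : forall s t, In s T3 -> In t T3 -> s <> t -> D (mul s (mul t A))).
  { assert (Hswap : forall s t, indep GS s t -> D (mul s (mul t A)) -> D (mul t (mul s A)))
      by (intros s t Hi; rewrite !mulA, (indep_comm GS s t Hi); exact id).
    intros s t Hs Ht Hst. simpl in Hs, Ht.
    destruct Hs as [<-|[<-|[<-|[]]]]; destruct Ht as [<-|[<-|[<-|[]]]]; try tauto;
      try assumption; apply Hswap; assumption. }
  assert (Hv : in_XD GS D (A, [])).
  { apply in_XD_of_filters; [apply (pre_cubic_incl T3 [] P3 (NoDup_nil _)), incl_nil_l |].
    intro f; simpl; rewrite mul1g; exact HA. }
  assert (HL : link_simplex GS D A T3).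
  { apply (proj2 (HN A Hv)); [discriminate | exact (proj1 P3) | |].
    - intros s Hs. apply in_XD_link_simplex; [discriminate |].
      apply vertex_in_XD; [| exact HA | apply Hvert, Hs].
      apply (pre_cubic_incl T3); [exact P3 | repeat constructor; simpl; tauto |].
      intros z [<-|[]]; exact Hs.
    - intros s t Hs Ht Hst. apply in_XD_link_simplex; [discriminate |].
      apply edge_in_XD; [| exact HA | apply Hvert, Hs | apply Hvert, Ht | apply Hedge; assumption].
      apply (pre_cubic_incl T3); [exact P3 | repeat constructor; simpl; intuition congruence |].
      intros z [<-|[<-|[]]]; assumption. }
  apply link_simplex_in_XD in HL as [_ HX].
  specialize (HX T3 (conj (proj1 P3) (incl_refl _))).
  simpl in HX. rewrite mulg1, <- !mulA in HX. exact HX.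
Qed.

End Cubes.

Theorem corollary4p5 (G : Group) (GS : GlidingSystem G) (Hreg : regular GS) :
  (forall D : G -> Prop, NPC GS D <-> cube_condition GS D) /\
  NPC GS (fun _ : G => True).
Proof.
  split.
  - intro D. split; [apply cube_condition_of_npc | apply npc_of_cube_condition]; exact Hreg.
  - apply npc_of_cube_condition; [exact Hreg |]. unfold cube_condition; intros; exact I.
Qed.
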